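(* (1) Two distinct seeds $\phi,\psi$ are neighbors if and only if $parent(\psi)=\phi$ or $parent(\phi)=\psi$. (2) If $\phi=parent(\psi)$, then $perms(\phi)\cap perms(\psi)=cycle(\widetilde\psi)$, and there is $i\in\{1,\dots,n-3\}$ with $\psi=son(\phi,i)$ (i.e. $\sigma^i(\phi^{(i)})=\widetilde\psi$); if moreover $height(\phi)=k<n-3$ then $height(\psi)=\Delta(k,i)$. (3) For every seed $\phi$ with $height(\phi)>1$ and every $i\in\{1,\dots,n-3\}$ there exists a seed $\beta$ with $son(\phi,i)=\beta$.
   Context: Fix an integer $n\ge 5$. An $n$-permutation is a sequence $(a_1,\dots,a_n)$ of the distinct elements of $\{1,\dots,n\}$. For $\pi=(a_1,\dots,a_n)$ put $\sigma(\pi)=(a_2,\dots,a_n,a_1)$ and $\tau(\pi)=(a_2,a_1,a_3,\dots,a_n)$; $cycle(\pi)$ denotes the set of the $n$ cyclic rotations of $\pi$; $\sigma^i$ is $\sigma$ applied $i$ times. On $\{1,\dots,n-1\}$ let $a\oplus 1=a+1$ for $a<n-1$ and $(n-1)\oplus 1=1$; $a\ominus 1$ is the unique $b$ with $b\oplus 1=a$, and $a\oplus j$, $a\ominus j$ denote $j$-fold iterates. A seed is an $(n-1)$-tuple $\psi=(a_1,\dots,a_{n-1})$ of distinct elements of $\{1,\dots,n\}$ with $a_1=n$ and $a_2\oplus1\notin\{a_1,\dots,a_{n-1}\}$; its missing element is $mis(\psi)=a_2\oplus 1$. The package $perms(\psi)$ is the set of all $n$-permutations obtained from $\psi$ by inserting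 $mis(\psi)$ at any position and then applying any cyclic rotation. Seeds $\phi,\psi$ are neighbors if $perms(\phi)\cap perms(\psi)\neq\emptyset$. For a seed $\psi=(a_1,\dots,a_{n-1})$ with $x=mis(\psi)$: $height(\psi)$ is the largest $k\in\{1,\dots,n-2\}$ such that $a_i=a_{i+1}\oplus 1$ for all $2\le i\le k$; $\widetilde\psi=(a_1,x,a_2,\dots,a_{n-1})$; and for $1\le i\le n-1$, $\psi^{(i)}=(x,c_1,\dots,c_{n-1})$ where $(c_1,\dots,c_{n-1})$ is $\psi$ cyclically rotated to the right by $i-1$ positions (so $\psi^{(1)}=(x,a_1,\dots,a_{n-1})$ and $\psi^{(n-1)}=(x,a_2,\dots,a_{n-1},a_1)$). For distinct neighboring seeds $\beta,\psi$ we write $parent(\beta)=\psi$ if $height(\psi)>1$ and $mis(\psi)=mis(\beta)\oplus 1$; if moreover $\sigma^i(\psi^{(i)})=\widetilde\beta$ we write $son(\psi,i)=\beta$ ($\beta$ is the $i$-th son of $\psi$). $\Delta(k,i)=\min(k-1,n-2-i)$. *)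

From mathcomp Require Import all_boot.
Set Implicit Arguments. Unset Strict Implicit. Unset Printing Implicit Defensive.

(* a (+) 1 on {1,...,n-1} *)
Definition succm (n a : nat) : nat := if a < n.-1 then a.+1 else 1.

Definition sigma (p : seq nat) : seq nat := rot 1 p.

Definition in_cycle (n : nat) (pi p : seq nat) : Prop :=
  exists2 k, k < n & p = rot k pi.

(* psi = (a_1,...,a_{n-1}) ; a_i is nth 0 psi (i-1) *)
Definition mis (n : nat) (psi : seq nat) : nat := succm n (nth 0 psi 1).

Definition is_seed (n : nat) (psi : seq nat) : bool :=
  [&& size psi == n.-1, uniq psi, all (fun a => (1 <= a) && (a <= n)) psi,
      nth 0 psi 0 == n & mis n psi \notin psi].

Definition in_perms (n : nat) (psi p : seq nat) : Prop :=
  exists j k, [/\ j <= n.-1, k < n &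
    p = rot k (take j psi ++ mis n psi :: drop j psi)].

Definition neighbors (n : nat) (phi psi : seq nat) : Prop :=
  exists p, in_perms n phi p /\ in_perms n psi p.

(* a_i = a_{i+1} (+) 1 for all 2 <= i <= k *)
Definition hcond (n : nat) (psi : seq nat) (k : nat) : bool :=
  [forall i : 'I_n, ((2 <= i) && (i <= k)) ==>
      (nth 0 psi i.-1 == succm n (nth 0 psi i))].

Definition height (n : nat) (psi : seq nat) : nat :=
  \max_(k < n.-1 | (1 <= k) && hcond n psi k) k.

Definition tilde (n : nat) (psi : seq nat) : seq nat :=
  nth 0 psi 0 :: mis n psi :: behead psi.

Definition sup (n : nat) (psi : seq nat) (i : nat) : seq nat :=
  mis n psi :: rotr i.-1 psi.

(* parent(beta) = psi *)
Definition parent_of (n : nat) (beta psi : seq nat) : Prop :=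
  [/\ is_seed n beta, is_seed n psi, beta <> psi, neighbors n beta psi &
      (1 < height n psi /\ mis n psi = succm n (mis n beta))].

Definition son_of (n : nat) (psi : seq nat) (i : nat) (beta : seq nat) : Prop :=
  parent_of n beta psi /\ iter i sigma (sup n psi i) = tilde n beta.

Definition Delta (n k i : nat) : nat := minn (k - 1) (n - 2 - i).

From mathcomp Require Import all_boot zify.
Set Implicit Arguments. Unset Strict Implicit. Unset Printing Implicit Defensive.

(* Every permutation in perms(psi) is a rotation of an insertion
   [ins psi j] = (a_1, ..., a_j, mis psi, a_(j+1), ...) with 1 <= j <= n-1, and
   since all of these start with n, a permutation shared by perms(phi) and
   perms(psi) comes from a single list ins phi j1 = ins psi j2.  Comparing the
   entries at positions 1 and 2 of that list shows that for distinct seeds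
   exactly one of j1, j2 is 1, say j2 = 1; then ins phi j1 is the tilde of psi,
   j1 > 2, mis(phi) = mis(psi) (+) 1 and a_2 = a_3 (+) 1 in phi: phi is the
   parent of psi.  This gives (1) and the cycle part of (2).  The son index is
   i = n - j1, since rotating phi^(i) by i steps gives ins phi (n - i).  Up to
   the insertion point the runs a_m = a_(m+1) (+) 1 of the child are those of
   the parent shifted by one place, and there the run breaks because (+) 1 has
   order n-1 on {1, ..., n-1}; this yields height(psi) = Delta(k, i).  Finally,
   for (3) the list ins phi (n - i) is read as the tilde of a new seed. *)

Lemma succm_mod n a : 1 < n -> a <= n.-1 -> succm n a = (a %% n.-1).+1.
Proof.
move=> n_gt1 a_le; rewrite /succm; case: ltnP => a_n; first by rewrite modn_small.
have -> : a = n.-1 by lia.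
by rewrite modnn.
Qed.

Lemma succm_range n a : 1 < n -> 0 < succm n a <= n.-1.
Proof. by move=> n_gt1; rewrite /succm; case: (ltnP a n.-1) => a_n; lia. Qed.

Lemma iter_succm n a j : 1 < n -> a <= n.-1 -> 0 < j ->
  iter j (succm n) a = ((a + j.-1) %% n.-1).+1.
Proof.
move=> n_gt1 a_le; elim: j => // [[|j]] IH _; first by rewrite /= addn0 succm_mod.
have rem_lt : (a + j) %% n.-1 < n.-1 by rewrite ltn_mod; lia.
rewrite iterS IH // succm_mod //.
by congr S; rewrite /= -addn1 modnDml; congr (_ %% _); lia.
Qed.

Lemma iter_succm_neq n a j : 1 < n -> 0 < a <= n.-1 -> 0 < j < n.-1 ->
  iter j (succm n) a != a.
Proof.
move=> n_gt1 a_range j_range; rewrite iter_succm; [apply/eqP => E|lia..].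
have : (a.-1 + j) %% n.-1 = a.-1 %% n.-1.
  by rewrite (_ : a.-1 + j = a + j.-1) 1?[a.-1 %% _]modn_small ?E //; lia.
move/eqP; rewrite -[X in _ == X %[mod _]]addn0 eqn_modDl mod0n modn_small //; lia.
Qed.

Lemma succm_neq n a : 2 < n -> 0 < a <= n.-1 -> succm n a != a.
Proof. by move=> n_gt2 a_range; apply: (@iter_succm_neq n a 1); lia. Qed.

Lemma succm2_neq n a : 3 < n -> 0 < a <= n.-1 -> succm n (succm n a) != a.
Proof. by move=> n_gt3 a_range; apply: (@iter_succm_neq n a 2); lia. Qed.

Lemma rot_cancel (T : eqType) (x0 : T) (s1 s2 : seq T) k1 k2 :
  uniq s1 -> size s1 = size s2 -> nth x0 s1 0 = nth x0 s2 0 ->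
  k1 < size s1 -> k2 < size s1 -> rot k1 s1 = rot k2 s2 -> s1 = s2.
Proof.
wlog k12 : s1 s2 k1 k2 / k1 <= k2.
  move=> W u1 sz h0 k1_lt k2_lt E; case: (leqP k1 k2) => [k12|k21].
    exact: W k12 u1 sz h0 k1_lt k2_lt E.
  have u2 : uniq s2 by rewrite -(rot_uniq k2) -E rot_uniq.
  by symmetry; apply: (W s2 s1 k2 k1); rewrite -?sz //; lia.
move=> u1 sz h0 k1_lt k2_lt E.
have {}E : s1 = rot (k2 - k1) s2.
  by apply: (@rot_inj k1); rewrite E -rotD ?subnKC // -sz; lia.
have u2 : uniq s2 by rewrite -(rot_uniq (k2 - k1)) -E.
have nth_eq : nth x0 s2 (k2 - k1) = nth x0 s2 0.
  by rewrite -h0 E /rot nth_cat size_drop ifT ?nth_drop ?addn0 //; lia.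
have /eqP k_eq : k2 - k1 == 0 by rewrite -(nth_uniq x0 (s := s2)) ?nth_eq //; lia.
by rewrite E k_eq rot0.
Qed.

Lemma iter_sigma i s : i <= size s -> iter i sigma s = rot i s.
Proof.
elim: i => [|i IH] i_le; first by rewrite rot0.
by rewrite iterS IH 1?/sigma -?rotD ?addn1 //; lia.
Qed.

Section Seeds.
Variable n : nat.

Lemma seed_size psi : is_seed n psi -> size psi = n.-1.
Proof. by case/and5P => /eqP. Qed.

Lemma seed_uniq psi : is_seed n psi -> uniq psi.
Proof. by case/and5P. Qed.

Lemma seed_head psi : is_seed n psi -> nth 0 psi 0 = n.
Proof. by case/and5P => _ _ _ /eqP. Qed.

Lemma seed_mis psi : is_seed n psi -> mis n psi \notin psi.
Proof. by case/and5P. Qed.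

Lemma seed_mem psi x : is_seed n psi -> x \in psi -> 0 < x <= n.
Proof. by case/and5P => _ _ /allP H _ _ /H. Qed.

Lemma seed_nth psi m : is_seed n psi -> 0 < m < n.-1 ->
  0 < nth 0 psi m <= n.-1.
Proof.
move=> seed_psi m_range; have size_psi := seed_size seed_psi.
have /(seed_mem seed_psi) : nth 0 psi m \in psi by apply: mem_nth; rewrite size_psi; lia.
have : nth 0 psi m != nth 0 psi 0.
  by rewrite nth_uniq ?size_psi ?(seed_uniq seed_psi) //; lia.
rewrite (seed_head seed_psi); lia.
Qed.

Lemma mis_range psi : 1 < n -> 0 < mis n psi <= n.-1.
Proof. exact: succm_range. Qed.

Definition ins (psi : seq nat) (j : nat) : seq nat :=
  take j psi ++ mis n psi :: drop j psi.

Lemma perm_ins psi j : perm_eq (ins psi j) (mis n psi :: psi).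
Proof. by rewrite /ins -cat1s perm_catCA /= cat_take_drop. Qed.

Lemma size_ins psi j : size (ins psi j) = (size psi).+1.
Proof. by rewrite (perm_size (perm_ins psi j)). Qed.

Lemma uniq_ins psi j : is_seed n psi -> uniq (ins psi j).
Proof.
by move=> seed_psi; rewrite (perm_uniq (perm_ins psi j)) /= seed_mis ?seed_uniq.
Qed.

Lemma nth_ins psi j m : j <= size psi ->
  nth 0 (ins psi j) m =
  if m < j then nth 0 psi m else if m == j then mis n psi else nth 0 psi m.-1.
Proof.
move=> j_le; rewrite /ins nth_cat size_take_min (minn_idPl j_le).
case: ltnP => [m_lt|m_ge]; first by rewrite nth_take.
case: eqP => [->|m_ne]; first by rewrite subnn.
by rewrite (_ : m - j = (m - j).-1.+1) 1?[LHS]/= ?nth_drop; [congr nth|]; lia.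
Qed.

Lemma filter_ins psi j : is_seed n psi -> filter (predC1 (mis n psi)) (ins psi j) = psi.
Proof.
move=> seed_psi; rewrite /ins filter_cat /= eqxx /= -filter_cat cat_take_drop.
apply/all_filterP/allP => y y_psi /=; apply: contraNneq (seed_mis seed_psi) => <-.
exact: y_psi.
Qed.

Lemma ins_inj phi psi j1 j2 : is_seed n phi -> is_seed n psi ->
  ins phi j1 = ins psi j2 -> mis n phi = mis n psi -> phi = psi.
Proof.
by move=> seed_phi seed_psi E M; rewrite -(filter_ins j1 seed_phi) -(filter_ins j2 seed_psi) E M.
Qed.

Lemma ins1_tilde psi : 0 < size psi -> ins psi 1 = tilde n psi.
Proof. by case: psi => // a s _; rewrite /ins /tilde /= take0 drop0. Qed.

Lemma nth_tilde psi m : 0 < m -> nth 0 psi m = nth 0 (tilde n psi) m.+1.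
Proof. by case: m => // m _; rewrite /tilde /= nth_behead. Qed.

Lemma ins_in_perms psi j k : j <= n.-1 -> k < n -> in_perms n psi (rot k (ins psi j)).
Proof. by move=> j_le k_lt; exists j, k. Qed.

Lemma sup_rot psi i : size psi = n.-1 -> 0 < i <= n.-1 ->
  iter i sigma (sup n psi i) = ins psi (n - i).
Proof.
move=> size_psi i_range; rewrite iter_sigma /sup /= ?size_rotr ?size_psi; last lia.
have size_front : size (mis n psi :: drop (size psi - i.-1) psi) = i.
  by rewrite /= size_drop size_psi; lia.
rewrite /rotr -cat_cons -{1}size_front rot_size_cat size_psi.
by rewrite (_ : n.-1 - i.-1 = n - i) //; lia.
Qed.

(* Inserting in front is a rotation of inserting at the end, so every element
   of perms(psi) is a rotation of an insertion at a position 1, ..., n-1. *)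
Lemma perms_norm psi p : 1 < n -> is_seed n psi -> in_perms n psi p ->
  exists j k, [/\ 0 < j <= n.-1, k < n & p = rot k (ins psi j)].
Proof.
move=> n_gt1 seed_psi [j [k [j_le k_lt ->]]]; have size_psi := seed_size seed_psi.
case: (posnP j) => [->|j_pos]; last by exists j, k; rewrite j_pos.
have size_end : size (ins psi n.-1) = n by rewrite size_ins size_psi; lia.
have -> : take 0 psi ++ mis n psi :: drop 0 psi = rotr 1 (ins psi n.-1).
  by rewrite /ins -size_psi take_size drop_size take0 drop0 cats1 rotr1_rcons.
exists n.-1; case: (posnP k) => [->|k_pos].
  by exists n.-1; rewrite rot0 /rotr size_end subn1; split => //; lia.
exists k.-1; split; try lia.
rewrite -{1}(prednK k_pos) -addn1 rotD ?rotrK // size_rotr size_end; lia.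
Qed.

Lemma common_insertion phi psi p : 1 < n -> is_seed n phi -> is_seed n psi ->
  in_perms n phi p -> in_perms n psi p ->
  exists j1 j2 k, [/\ 0 < j1 <= n.-1, 0 < j2 <= n.-1, k < n,
     p = rot k (ins phi j1) & ins phi j1 = ins psi j2].
Proof.
move=> n_gt1 seed_phi seed_psi /(perms_norm n_gt1 seed_phi) [j1 [k1 [j1_range k1_lt E1]]]
  /(perms_norm n_gt1 seed_psi) [j2 [k2 [j2_range k2_lt E2]]].
exists j1, j2, k1; split => //.
have size_phi := seed_size seed_phi; have size_psi := seed_size seed_psi.
apply: (rot_cancel (x0 := 0) (k1 := k1) (k2 := k2)); rewrite ?size_ins ?size_phi ?size_psi //.
- exact: uniq_ins.
- by rewrite !nth_ins ?size_phi ?size_psi ?ifT ?(seed_head seed_phi) ?(seed_head seed_psi); lia.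
- lia.
- lia.
- by rewrite -E1 -E2.
Qed.

Lemma hcondP psi k : k < n ->
  reflect (forall m, 2 <= m <= k -> nth 0 psi m.-1 = succm n (nth 0 psi m))
          (hcond n psi k).
Proof.
move=> k_lt; apply: (iffP forallP) => [H m m_range|H i].
  by have /implyP/(_ m_range)/eqP := H (Ordinal (leq_ltn_trans (proj2 (andP m_range)) k_lt)).
by apply/implyP => i_range; apply/eqP/H.
Qed.

Lemma hcond_le psi h k : h <= k < n -> hcond n psi k -> hcond n psi h.
Proof.
move=> hk /hcondP run_k; apply/hcondP => [|m m_range]; last apply: run_k; lia.
Qed.

Lemma height_le psi : height n psi <= n.-2.
Proof. by apply/bigmax_leqP => k _; have := ltn_ord k; lia. Qed.

Lemma height_ge psi h : 0 < h < n.-1 -> hcond n psi h -> h <= height n psi.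
Proof.
move=> /andP[h_pos h_lt] run_h.
by apply: (@leq_bigmax_cond _ _ (fun k : 'I_n.-1 => val k) (Ordinal h_lt)); rewrite /= h_pos.
Qed.

Lemma height_lt psi h : 0 < h < n -> ~~ hcond n psi h -> height n psi < h.
Proof.
move=> h_range no_run; suff : height n psi <= h.-1 by lia.
apply/bigmax_leqP => k /andP[_ run_k]; rewrite leqNgt; apply: contra no_run => k_gt.
by apply: (hcond_le _ run_k); have := ltn_ord k; lia.
Qed.

Lemma height_eq psi h : 0 < h < n.-1 -> hcond n psi h ->
  (h.+1 < n.-1 -> ~~ hcond n psi h.+1) -> height n psi = h.
Proof.
move=> h_range run_h no_run; apply/eqP; rewrite eqn_leq height_ge // andbT.
case: (ltnP h.+1 n.-1) => [h_lt|h_ge]; last by have := height_le psi; lia.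
by rewrite -ltnS; apply: height_lt (no_run h_lt); lia.
Qed.

(* The run of length 1 always exists, so the height is the length of the
   maximal run. *)
Lemma height_spec psi : 2 < n ->
  [/\ 0 < height n psi, hcond n psi (height n psi) &
      ((height n psi).+1 < n.-1 -> ~~ hcond n psi (height n psi).+1)].
Proof.
move=> n_gt2; have height_n := height_le psi.
have height_pos : 0 < height n psi.
  by apply: (@leq_trans 1); last apply: height_ge; [|lia|apply/hcondP; lia].
split => // [|h_lt].
  apply/negPn/negP => H.
  suff : height n psi < height n psi by rewrite ltnn.
  by apply: height_lt H; lia.
apply/negP => H.
suff : height n psi < height n psi by rewrite ltnn.
by apply: height_ge H; lia.
Qed.

Lemma height_gt1 psi : 3 < n -> 1 < height n psi <-> nth 0 psi 1 = succm n (nth 0 psi 2).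
Proof.
move=> n_gt3; split => [height_gt|step].
  have [_ run _] := height_spec psi (ltnW n_gt3).
  have height_lt_n : height n psi < n by have := height_le psi; lia.
  by move/(hcondP psi height_lt_n): run => /(_ 2); apply; lia.
apply: (height_ge (h := 2)); first lia.
by apply/hcondP => [|m m_range]; [lia | rewrite (_ : m = 2) //; lia].
Qed.

Lemma run_iter psi k b : k < n -> hcond n psi k -> 0 < b <= k ->
  nth 0 psi 1 = iter b.-1 (succm n) (nth 0 psi b).
Proof.
move=> k_lt /(hcondP psi k_lt) run; elim: b => // [[|b]] IH b_range //.
rewrite IH; last lia.
by rewrite (run b.+2) ?iterSr //; lia.
Qed.

Section ParentChild.
Hypothesis n_gt4 : 4 < n.
Let n_gt3 : 3 < n := ltnW n_gt4.
Let n_gt2 : 2 < n := ltnW n_gt3.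
Let n_gt1 : 1 < n := ltnW n_gt2.

(* When two distinct seeds share an insertion, exactly one of them inserts its
   missing element right after the leading n: otherwise the entries at
   position 1 force equal missing elements, hence equal seeds. *)
Lemma one_side_at_one phi psi j1 j2 : is_seed n phi -> is_seed n psi -> phi <> psi ->
  0 < j1 <= n.-1 -> 0 < j2 <= n.-1 -> ins phi j1 = ins psi j2 ->
  (j1 = 1 /\ 1 < j2) \/ (j2 = 1 /\ 1 < j1).
Proof.
move=> seed_phi seed_psi phi_psi j1_range j2_range E.
have size_phi := seed_size seed_phi; have size_psi := seed_size seed_psi.
have distinct_mis : mis n phi <> mis n psi by move/(ins_inj seed_phi seed_psi E).
have : nth 0 (ins phi j1) 1 = nth 0 (ins psi j2) 1 by rewrite E.
rewrite !nth_ins ?size_phi ?size_psi; try lia.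
case: (ltngtP j1 1) => [|j1_gt|j1_1]; first lia.
- case: (ltngtP j2 1) => [|j2_gt|j2_1] entry1; first lia.
  + by case: distinct_mis; rewrite /mis entry1.
  + by right.
- case: (ltngtP j2 1) => [|j2_gt|j2_1] entry1; first lia.
  + by left.
  + by case: distinct_mis.
Qed.

(* If the tilde of psi is an insertion into phi at a position j > 1, then
   j > 2, mis(phi) = mis(psi) (+) 1 and phi has height > 1: entry 1 of that
   list is a_2 of phi and mis(psi) at once, and entry 2 relates a_3 of phi to
   the a_2 of psi. *)
Lemma child_insertion phi psi j : is_seed n phi -> is_seed n psi ->
  1 < j <= n.-1 -> ins phi j = tilde n psi ->
  [/\ 2 < j, mis n phi = succm n (mis n psi) & 1 < height n phi].
Proof.
move=> seed_phi seed_psi j_range E.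
have j_le : j <= size phi by rewrite (seed_size seed_phi); lia.
have entry1 : nth 0 phi 1 = mis n psi.
  by have := nth_ins 1 j_le; rewrite E ifT //; lia.
have mis_phi : mis n phi = succm n (mis n psi) by rewrite -entry1.
have entry2 := nth_ins 2 j_le; rewrite E /= in entry2.
case: (ltngtP j 2) entry2 => [|j_gt|j_2] entry2; first lia.
  split => //; apply/height_gt1; first lia.
  by rewrite entry1 -entry2 nth_behead.
have := succm2_neq n_gt3 (mis_range psi n_gt1).
by rewrite -mis_phi {2}/mis -nth_behead entry2 eqxx.
Qed.

(* Hence such an insertion makes phi the parent of psi: the tilde of psi
   lies in both packages, and the distinct missing elements separate them. *)
Lemma parent_of_insertion phi psi j : is_seed n phi -> is_seed n psi ->
  1 < j <= n.-1 -> ins phi j = tilde n psi -> parent_of n psi phi.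
Proof.
move=> seed_phi seed_psi j_range E.
have [_ mis_phi height_phi] := child_insertion seed_phi seed_psi j_range E.
split => //.
- move=> psi_phi; have := succm_neq n_gt2 (mis_range psi n_gt1).
  by rewrite -mis_phi psi_phi eqxx.
- exists (tilde n psi); split; rewrite -(rot0 (tilde n psi)).
    by rewrite -ins1_tilde ?(seed_size seed_psi); [apply: ins_in_perms|]; lia.
  by rewrite -E; apply: ins_in_perms; lia.
Qed.

Lemma child_position phi psi j1 j2 : parent_of n psi phi ->
  0 < j1 <= n.-1 -> 0 < j2 <= n.-1 -> ins phi j1 = ins psi j2 ->
  j2 = 1 /\ 2 < j1.
Proof.
move=> [seed_psi seed_phi psi_phi _ [_ mis_phi]] j1_range j2_range E.
have phi_psi : phi <> psi by move=> e; apply: psi_phi.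
case: (one_side_at_one seed_phi seed_psi phi_psi j1_range j2_range E).
- (* phi would also be a child of psi: two steps of (+) 1 would return *)
  case=> j1_1 j2_gt; rewrite j1_1 ins1_tilde ?(seed_size seed_phi) in E; last lia.
  have [|_ mis_psi _] := child_insertion seed_psi seed_phi _ (esym E); first lia.
  have := succm2_neq n_gt3 (mis_range psi n_gt1).
  by rewrite -mis_phi -mis_psi eqxx.
- case=> j2_1 j1_gt; rewrite j2_1 ins1_tilde ?(seed_size seed_psi) in E; last lia.
  by have [|] := child_insertion seed_phi seed_psi _ E; first lia.
Qed.

Lemma neighbors_parent phi psi : is_seed n phi -> is_seed n psi -> phi <> psi ->
  neighbors n phi psi <-> parent_of n psi phi \/ parent_of n phi psi.
Proof.
move=> seed_phi seed_psi phi_psi; split; last first.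
  by case=> [[_ _ _ [p [in_psi in_phi]] _]|[_ _ _ nb _]] //; exists p.
case=> p [in_phi in_psi].
have [j1 [j2 [_ [j1_range j2_range _ _ E]]]] :=
  common_insertion n_gt1 seed_phi seed_psi in_phi in_psi.
case: (one_side_at_one seed_phi seed_psi phi_psi j1_range j2_range E).
- case=> j1_1 j2_gt; right; rewrite j1_1 ins1_tilde ?(seed_size seed_phi) in E; last lia.
  by apply: (parent_of_insertion seed_psi seed_phi _ (esym E)); lia.
- case=> j2_1 j1_gt; left; rewrite j2_1 ins1_tilde ?(seed_size seed_psi) in E; last lia.
  by apply: (parent_of_insertion seed_phi seed_psi _ E); lia.
Qed.

Lemma child_index phi psi : parent_of n psi phi ->
  exists2 j, 2 < j <= n.-1 & ins phi j = tilde n psi.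
Proof.
move=> parent; case: (parent) => seed_psi seed_phi _ [p [in_psi in_phi]] _.
have [j1 [j2 [_ [j1_range j2_range _ _ E]]]] :=
  common_insertion n_gt1 seed_phi seed_psi in_phi in_psi.
have [j2_1 j1_gt] := child_position parent j1_range j2_range E.
by exists j1; [lia | rewrite E j2_1 ins1_tilde // (seed_size seed_psi); lia].
Qed.

Lemma common_perms_cycle phi psi p : parent_of n psi phi ->
  in_perms n phi p /\ in_perms n psi p <-> in_cycle n (tilde n psi) p.
Proof.
move=> parent; case: (parent) => seed_psi seed_phi _ _ _.
have size_psi := seed_size seed_psi.
split.
  case=> in_phi in_psi.
  have [j1 [j2 [k [j1_range j2_range k_lt -> E]]]] :=
    common_insertion n_gt1 seed_phi seed_psi in_phi in_psi.
  have [j2_1 _] := child_position parent j1_range j2_range E.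
  by exists k => //; rewrite E j2_1 ins1_tilde // size_psi; lia.
case=> k k_lt ->; have [j j_range E] := child_index parent.
split; first by rewrite -E; apply: ins_in_perms; lia.
by rewrite -ins1_tilde ?size_psi; [apply: ins_in_perms|]; lia.
Qed.

Lemma hcond_child phi psi j h : size phi = n.-1 -> j <= n.-1 ->
  ins phi j = tilde n psi -> nth 0 phi 1 = succm n (nth 0 phi 2) ->
  h.+1 < j -> hcond n psi h = hcond n phi h.+1.
Proof.
move=> size_phi j_le E step h_lt_j; have h_lt_n : h.+1 < n by lia.
have entry m : 0 < m -> m.+1 < j -> nth 0 psi m = nth 0 phi m.+1.
  by move=> m_pos m_lt; rewrite nth_tilde // -E nth_ins ?size_phi ?m_lt.
apply/idP/idP => [/(hcondP psi (ltnW h_lt_n)) run|/(hcondP phi h_lt_n) run].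
  apply/(hcondP phi h_lt_n) => -[|[|[|l]]] m_range; [lia | lia | exact: step |].
  by rewrite /= -!entry; [apply: (run l.+2) | lia..].
apply/(hcondP psi (ltnW h_lt_n)) => -[|[|l]] m_range; try lia.
by rewrite !entry; [apply: (run l.+3) | lia..].
Qed.

(* A run of the parent reaching past the insertion point is broken in the child:
   there the child's entry is mis(phi) = a_2 (+) 1, which would close a cycle of
   fewer than n-1 steps. *)
Lemma child_run_break phi psi j : is_seed n phi -> ins phi j = tilde n psi ->
  2 < j < n.-1 -> j <= (height n phi).+1 -> ~~ hcond n psi j.-1.
Proof.
move=> seed_phi E j_range j_le; have size_phi := seed_size seed_phi.
have [_ run_phi _] := height_spec phi n_gt2.
have height_lt : height n phi < n by have := height_le phi; lia.
have entry m : 0 < m -> nth 0 psi m = nth 0 (ins phi j) m.+1.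
  by move=> m_pos; rewrite E nth_tilde.
have before_j : nth 0 psi j.-2 = nth 0 phi j.-1.
  rewrite entry ?nth_ins ?size_phi; [|lia..].
  by rewrite (_ : j.-2.+1 = j.-1) ?ifT //; lia.
have at_j : nth 0 psi j.-1 = iter j.-1 (succm n) (nth 0 phi j.-1).
  rewrite entry ?prednK ?nth_ins ?size_phi ?ltnn ?eqxx //; try lia.
  by rewrite /mis (run_iter height_lt run_phi (b := j.-1)) -?iterS ?prednK //; lia.
have a_range : 0 < nth 0 phi j.-1 <= n.-1 by apply: seed_nth => //; lia.
have no_return : iter j (succm n) (nth 0 phi j.-1) != nth 0 phi j.-1.
  by apply: iter_succm_neq a_range _; lia.
have j1_lt : j.-1 < n by lia.
have j1_range : 1 < j.-1 <= j.-1 by lia.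
apply/negP => /(hcondP psi j1_lt) /(_ j.-1 j1_range).
rewrite before_j at_j -iterS prednK; last lia.
by move=> return_eq; move: no_return; rewrite -return_eq eqxx.
Qed.

Lemma child_height phi psi j : is_seed n phi -> 2 < j <= n.-1 ->
  ins phi j = tilde n psi -> 1 < height n phi -> height n phi < n - 3 ->
  height n psi = Delta n (height n phi) (n - j).
Proof.
move=> seed_phi j_range E height_gt height_small.
have size_phi := seed_size seed_phi.
have step : nth 0 phi 1 = succm n (nth 0 phi 2) by apply/height_gt1; lia.
have [_ run_phi no_run_phi] := height_spec phi n_gt2.
have child_run h : h.+1 < j -> hcond n psi h = hcond n phi h.+1.
  by apply: hcond_child => //; lia.
rewrite /Delta (_ : n - 2 - (n - j) = j - 2); last lia.
set k := height n phi in height_gt height_small run_phi no_run_phi *.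
case: (leqP k (j - 2)) => [k_le|k_gt].
- have k_pred : (k - 1).+1 = k by lia.
  rewrite (minn_idPl _); last lia.
  apply: height_eq => [||_]; first lia.
    by rewrite child_run k_pred //; lia.
  by rewrite k_pred child_run; [apply: no_run_phi | ]; lia.
- have j_pred : (j - 2).+1 = j.-1 by lia.
  rewrite (minn_idPr _); last lia.
  apply: height_eq => [||_]; first lia.
    by rewrite child_run; [apply: (hcond_le _ run_phi) | ]; lia.
  by rewrite j_pred; apply: (child_run_break seed_phi E); lia.
Qed.

Lemma son_of_insertion phi beta j : is_seed n phi -> is_seed n beta ->
  1 < j <= n.-1 -> ins phi j = tilde n beta -> son_of n phi (n - j) beta.
Proof.
move=> seed_phi seed_beta j_range E; split; first exact: parent_of_insertion E.
by rewrite sup_rot ?(seed_size seed_phi) ?subKn //; lia.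
Qed.

Lemma seed_of_tilde x rest : uniq [:: n, x & rest] -> size rest = n.-2 ->
  all (fun a => (1 <= a) && (a <= n)) rest -> x = succm n (nth 0 rest 0) ->
  is_seed n (n :: rest) /\ tilde n (n :: rest) = [:: n, x & rest].
Proof.
move=> /= /and3P[]; rewrite inE negb_or => /andP[n_x n_rest] x_rest uniq_rest.
move=> size_rest range_rest x_eq; have mis_eq : mis n (n :: rest) = x by rewrite x_eq.
split; last by rewrite /tilde mis_eq.
apply/and5P; split => //=.
- by rewrite size_rest; apply/eqP; lia.
- by rewrite n_rest.
- by rewrite leqnn range_rest andbT; lia.
- by rewrite mis_eq inE negb_or eq_sym n_x.
Qed.

(* Statement (3): for a seed of height > 1, every position i in 1..n-3 has a
   son, obtained by reading the insertion at position n - i as a tilde. *)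
Lemma son_exists phi i : is_seed n phi -> 1 < height n phi -> 0 < i <= n - 3 ->
  exists beta, is_seed n beta /\ son_of n phi i beta.
Proof.
move=> seed_phi height_gt i_range; have size_phi := seed_size seed_phi.
have step : nth 0 phi 1 = succm n (nth 0 phi 2) by apply/height_gt1; lia.
set L := ins phi (n - i).
have size_L : size L = n by rewrite size_ins size_phi; lia.
have entry m : m < 3 -> nth 0 L m = nth 0 phi m.
  by move=> m_lt; rewrite nth_ins ?size_phi ?ifT //; lia.
have L_shape : L = [:: n, nth 0 phi 1 & drop 2 L].
  have front2 (s : seq nat) : 1 < size s -> s = [:: nth 0 s 0, nth 0 s 1 & drop 2 s].
    by case: s => [|a [|b s]] //= _; rewrite drop0.
  by rewrite -(seed_head seed_phi) -!entry // -front2 // size_L; lia.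
have range_L : all (fun a => (1 <= a) && (a <= n)) L.
  apply/allP => a; rewrite (perm_mem (perm_ins phi (n - i))) inE.
  by case/orP => [/eqP ->|/(seed_mem seed_phi)]; [have := mis_range phi n_gt1|]; lia.
have [seed_beta tilde_beta] :
    is_seed n (n :: drop 2 L) /\ tilde n (n :: drop 2 L) = [:: n, nth 0 phi 1 & drop 2 L].
  apply: seed_of_tilde.
  - by rewrite -L_shape (uniq_ins _ seed_phi).
  - by rewrite size_drop size_L; lia.
  - by move: range_L; rewrite {1}L_shape => /and3P[_ _].
  - by rewrite nth_drop entry.
exists (n :: drop 2 L); split => //.
rewrite -{1}(subKn (_ : i <= n)); last lia.
by apply: (son_of_insertion seed_phi seed_beta); [lia | rewrite tilde_beta -L_shape].
Qed.

End ParentChild.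

End Seeds.

Theorem mainTheorem3 (n : nat) (hn : 5 <= n) :
  (* (1) *)
  (forall phi psi : seq nat, is_seed n phi -> is_seed n psi -> phi <> psi ->
     (neighbors n phi psi <-> parent_of n psi phi \/ parent_of n phi psi)) /\
  (* (2) *)
  (forall phi psi : seq nat, parent_of n psi phi ->
     (forall p, (in_perms n phi p /\ in_perms n psi p) <-> in_cycle n (tilde n psi) p) /\
     (exists i, [/\ 1 <= i, i <= n - 3, son_of n phi i psi &
        (height n phi < n - 3 -> height n psi = Delta n (height n phi) i)])) /\
  (* (3) *)
  (forall (phi : seq nat) (i : nat), is_seed n phi -> 1 < height n phi ->
     1 <= i -> i <= n - 3 -> exists beta, is_seed n beta /\ son_of n phi i beta).
Proof.
split; [|split].
- exact: neighbors_parent.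
- move=> phi psi parent; split => [p|]; first exact: common_perms_cycle.
  have [j j_range E] := child_index hn parent.
  have [seed_psi seed_phi _ _ [height_gt _]] := parent.
  exists (n - j); split; [lia | lia | apply: son_of_insertion => //; lia |].
  by move=> height_small; apply: child_height => //; lia.
- by move=> phi i seed_phi height_gt i_pos i_le; apply: son_exists; rewrite ?i_pos.
Qed.
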